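(* Consider MPI ranks that invoke collective communication through a wrapper which first calls a trivial barrier (MPI\_Barrier() over the participating ranks) and then makes the original MPI collective communication call. For a given invocation of such a wrapper, at any moment one of the following four cases holds: (a) some MPI rank is in the collective communication call, and all other ranks are either in the call or have exited it; (b) some MPI rank is in the collective communication call, no rank has exited it, and every other rank has at least entered the trivial barrier (and possibly proceeded further); (c) some MPI rank is in the trivial barrier and no other rank has exited it (though some may not yet have entered the trivial barrier); (d) either no MPI rank has entered the trivial barrier, or all MPI ranks have exited the MPI collective communication call.
   Context: Events are ordered by Lamport's happens-before relation. Barrier axiom (assumed, applied to the trivial barrier and to the collective call viewed as a synchronization among all participants): for a given invocation of an MPI barrier, it never happens that a rank A exits the barrier before (under happens-before) another participating rank B enters that barrier. *)

Set Implicit Arguments.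

(* The events of one rank during one invocation of the wrapper.
   ExitBarrier  r : rank r exits the trivial barrier; the wrapper then
                    immediately makes the collective call, so this event is
                    also rank r's entry into the collective call. *)
Inductive event (Rank : Type) : Type :=
| EnterBarrier (r : Rank)
| ExitBarrier (r : Rank)
| ExitColl (r : Rank).

Arguments EnterBarrier {Rank} r.
Arguments ExitBarrier {Rank} r.
Arguments ExitColl {Rank} r.

(* Lamport's happens-before relation: a strict partial order on events which
   contains the program order of each rank. *)
Definition happens_before_order (Rank : Type) (hb : event Rank -> event Rank -> Prop) : Prop :=
  (forall e, ~ hb e e) /\
  (forall e1 e2 e3, hb e1 e2 -> hb e2 e3 -> hb e1 e3) /\
  (forall r, hb (EnterBarrier r) (ExitBarrier r)) /\
  (forall r, hb (ExitBarrier r) (ExitColl r)).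

(* A moment: a consistent cut, i.e. the set of events that have occurred,
   downward closed under happens-before. *)
Definition moment (Rank : Type) (hb : event Rank -> event Rank -> Prop)
  (C : event Rank -> Prop) : Prop :=
  forall e1 e2, hb e1 e2 -> C e2 -> C e1.

Definition barrier_axiom_trivial (Rank : Type) (hb : event Rank -> event Rank -> Prop) : Prop :=
  forall C, moment hb C ->
  forall A B, ~ (C (ExitBarrier A) /\ ~ C (EnterBarrier B)).

(* Barrier axiom applied to the collective call (entry = ExitBarrier). *)
Definition barrier_axiom_coll (Rank : Type) (hb : event Rank -> event Rank -> Prop) : Prop :=
  forall C, moment hb C ->
  forall A B, ~ (C (ExitColl A) /\ ~ C (ExitBarrier B)).

Definition in_barrier (Rank : Type) (C : event Rank -> Prop) (r : Rank) : Prop :=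
  C (EnterBarrier r) /\ ~ C (ExitBarrier r).
Definition in_coll (Rank : Type) (C : event Rank -> Prop) (r : Rank) : Prop :=
  C (ExitBarrier r) /\ ~ C (ExitColl r).
Definition exited_coll (Rank : Type) (C : event Rank -> Prop) (r : Rank) : Prop :=
  C (ExitColl r).

From Stdlib Require Import Classical.

Set Implicit Arguments.

(* Classify the moment by the furthest stage any rank has reached.  If some
   rank has exited the collective call, the barrier axiom for the call says
   every rank has entered it, giving (a) or the second half of (d).  Otherwise,
   if some rank has exited the trivial barrier, the barrier axiom for the
   barrier says every rank has entered it, giving (b).  Otherwise nobody has
   left the barrier, giving (c) or the first half of (d). *)

Section BarrierAxioms.

Variables (Rank : Type) (hb : event Rank -> event Rank -> Prop)
  (C : event Rank -> Prop).
Hypothesis HC : moment hb C.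

Lemma exited_barrier_all_entered :
  barrier_axiom_trivial hb ->
  forall a, C (ExitBarrier a) -> forall s, C (EnterBarrier s).
Proof.
intros Hbar a Ha s.
apply NNPP; intros Hs.
exact (Hbar C HC a s (conj Ha Hs)).
Qed.

Lemma exited_coll_all_entered :
  barrier_axiom_coll hb ->
  forall a, C (ExitColl a) -> forall s, C (ExitBarrier s).
Proof.
intros Hcoll a Ha s.
apply NNPP; intros Hs.
exact (Hcoll C HC a s (conj Ha Hs)).
Qed.

End BarrierAxioms.

Section Stages.

Variables (Rank : Type) (C : event Rank -> Prop).

Lemma all_entered_coll_cases :
  (forall s, C (ExitBarrier s)) ->
  (exists r, in_coll C r /\ forall s, s <> r -> in_coll C s \/ exited_coll C s)
  \/ (forall s, exited_coll C s).
Proof.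
intros Hentered.
destruct (classic (forall s, exited_coll C s)) as [Hall | [r Hr]%not_all_ex_not].
- right; exact Hall.
- left; exists r; split.
  + split; [apply Hentered | exact Hr].
  + intros s _.
    destruct (classic (exited_coll C s)) as [Hs | Hs].
    * right; exact Hs.
    * left; split; [apply Hentered | exact Hs].
Qed.

Lemma none_exited_barrier_cases :
  (forall s, ~ C (ExitBarrier s)) ->
  (exists r, in_barrier C r /\ forall s, s <> r -> ~ C (ExitBarrier s))
  \/ (forall s, ~ C (EnterBarrier s)).
Proof.
intros Hnone.
destruct (classic (exists r, C (EnterBarrier r))) as [[r Hr] | Hnobody].
- left; exists r; split.
  + split; [exact Hr | apply Hnone].
  + intros s _; apply Hnone.
- right; intros s Hs; apply Hnobody; exists s; exact Hs.
Qed.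

End Stages.

Theorem lemma2 (Rank : Type) (hb : event Rank -> event Rank -> Prop)
  (Hhb : happens_before_order hb)
  (Hbar : barrier_axiom_trivial hb)
  (Hcoll : barrier_axiom_coll hb)
  (C : event Rank -> Prop) (HC : moment hb C) :
  (* (a) *)
  (exists r, in_coll C r /\
     forall s, s <> r -> in_coll C s \/ exited_coll C s)
  \/
  (* (b) *)
  (exists r, in_coll C r /\ (forall s, ~ C (ExitColl s)) /\
     forall s, s <> r -> C (EnterBarrier s))
  \/
  (* (c) *)
  (exists r, in_barrier C r /\ forall s, s <> r -> ~ C (ExitBarrier s))
  \/
  (* (d) *)
  ((forall s, ~ C (EnterBarrier s)) \/ (forall s, C (ExitColl s))).
Proof.
destruct (classic (exists a, C (ExitColl a))) as [[a Ha] | Hno_exit_coll].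
- destruct (all_entered_coll_cases C (exited_coll_all_entered HC Hcoll a Ha))
    as [Hcase_a | Hall_exited].
  + left; exact Hcase_a.
  + right; right; right; right; exact Hall_exited.
- assert (Hnone : forall s, ~ C (ExitColl s))
    by (intros s Hs; apply Hno_exit_coll; exists s; exact Hs).
  destruct (classic (exists r, C (ExitBarrier r))) as [[r Hr] | Hno_exit_bar].
  + right; left; exists r; split; [split; [exact Hr | apply Hnone] |].
    split; [exact Hnone |].
    intros s _; exact (exited_barrier_all_entered HC Hbar r Hr s).
  + assert (Hinside : forall s, ~ C (ExitBarrier s))
      by (intros s Hs; apply Hno_exit_bar; exists s; exact Hs).
    destruct (none_exited_barrier_cases C Hinside) as [Hcase_c | Hnobody].
    * right; right; left; exact Hcase_c.
    * right; right; right; left; exact Hnobody.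
Qed.
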